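(* Let $\mathfrak{N}$ be a pseudo-Euclidean 2-step nilpotent Lie algebra with Ricci curvature $\mathfrak{r}$, and suppose there exists $\lambda\in\mathbb{R}$ such that $\mathfrak{r}=\lambda\langle\cdot,\cdot\rangle$. Then $\lambda=0$.
   Context: A pseudo-Euclidean Lie algebra is a finite-dimensional real Lie algebra with a nondegenerate symmetric bilinear form $\langle\cdot,\cdot\rangle$. It is 2-step nilpotent if $0\ne[\mathfrak{N},\mathfrak{N}]\subset\mathfrak{Z}$ (the center). The Levi-Civita product is defined by $2\langle\mathcal{D}_uv,w\rangle=\langle[u,v],w\rangle+\langle[w,u],v\rangle+\langle[w,v],u\rangle$, the curvature by $\mathcal{R}(u,v)w=\mathcal{D}_{[u,v]}w-\mathcal{D}_u\mathcal{D}_vw+\mathcal{D}_v\mathcal{D}_uw$, and the Ricci curvature by $\mathfrak{r}(u,v)=\mathrm{tr}(w\mapsto\mathcal{R}(u,w)v)$. *)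

From HB Require Import structures.
From mathcomp Require Import all_boot all_order all_algebra.
From mathcomp Require Import reals.
Set Implicit Arguments. Unset Strict Implicit. Unset Printing Implicit Defensive.
Import Order.TTheory GRing.Theory Num.Theory.
Local Open Scope ring_scope.

Section PseudoEuclideanLie.
Variables (R : realType) (n : nat).
Notation V := 'rV[R]_n.

Definition is_lie_bracket (br : V -> V -> V) : Prop :=
  [/\ (forall (a : R) (x y z : V), br (a *: x + y) z = a *: br x z + br y z),
      (forall x y : V, br x y = - br y x) &
      (forall x y z : V, br x (br y z) + br y (br z x) + br z (br x y) = 0)].

Definition is_nondeg_sym_form (B : V -> V -> R) : Prop :=
  [/\ (forall (a : R) (x y z : V), B (a *: x + y) z = a * B x z + B y z),
      (forall x y : V, B x y = B y x) &
      (forall x : V, (forall y : V, B x y = 0) -> x = 0)].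

Definition two_step_nilpotent (br : V -> V -> V) : Prop :=
  (exists x y : V, br x y != 0) /\ (forall x y z : V, br (br x y) z = 0).

(* D is the Levi-Civita product:
   2 <D_u v, w> = <[u,v],w> + <[w,u],v> + <[w,v],u>.
   (By nondegeneracy of B there is exactly one such D.) *)
Definition is_levi_civita (br : V -> V -> V) (B : V -> V -> R)
  (D : V -> V -> V) : Prop :=
  forall u v w : V,
    2 * B (D u v) w = B (br u v) w + B (br w u) v + B (br w v) u.

Definition curvature (br : V -> V -> V) (D : V -> V -> V) (u v w : V) : V :=
  D (br u v) w - D u (D v w) + D v (D u w).

Definition ricci (br : V -> V -> V) (D : V -> V -> V) (u v : V) : R :=
  \tr (lin1_mx (fun w : V => curvature br D u w v)).

End PseudoEuclideanLie.

(* For a Lie algebra with [[N, N], N] = 0 the Levi-Civita product is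
   D_u v = ([u, v] - ad_u^* v - j(u) v) / 2, where <j(u) a, b> = <u, [a, b]>,
   and the Ricci form becomes r(u, v) = - tr (ad_v^* ad_u) / 2 - tr (j(u) j(v)) / 4.
   The operator psi with <u, psi c> = tr (j(u) j(c)) takes values in [N, N],
   hence in the centre. Evaluating r = lambda <.,.> on central vectors gives
   psi^2 = -4 lambda psi; taking the trace of r over a pair of dual bases
   (e_k), (e^k), together with
   sum_k tr (j(e_k) j(e^k)) = - sum_k tr (ad_{e^k}^* ad_{e_k}),
   gives tr psi = 4 lambda dim N. If lambda <> 0, then -psi / (4 lambda) is an
   idempotent of trace - dim N, impossible since the trace of an idempotent is
   its rank. So lambda dim N = 0, and dim N > 0 because [N, N] <> 0. *)

From HB Require Import structures.
From mathcomp Require Import all_boot all_order all_algebra.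
From mathcomp Require Import reals ring.
Import Order.TTheory GRing.Theory Num.Theory.
Local Open Scope ring_scope.
Set Implicit Arguments. Unset Strict Implicit. Unset Printing Implicit Defensive.

Local Notation "''e_' j" := (delta_mx 0 j)
  (format "''e_' j", at level 8, j at level 2) : ring_scope.

Section LinearMaps.
Variables (R : pzRingType) (U V : lmodType R) (f : U -> V).
Hypothesis f_linear : linear f.
Let F : {linear U -> V} := HB.pack f (GRing.isLinear.Build R U V *:%R f f_linear).

Lemma lin0 : f 0 = 0. Proof. exact: (linear0 F). Qed.
Lemma linD x y : f (x + y) = f x + f y. Proof. exact: (linearD F). Qed.
Lemma linN x : f (- x) = - f x. Proof. exact: (linearN F). Qed.
Lemma linZ a x : f (a *: x) = a *: f x. Proof. exact: (linearZZ F). Qed.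
Lemma lin_sum I r (P : pred I) (v : I -> U) :
  f (\sum_(i <- r | P i) v i) = \sum_(i <- r | P i) f (v i).
Proof. exact: (linear_sum F). Qed.

End LinearMaps.

Section ScalarMaps.
Variables (R : pzRingType) (U : lmodType R) (f : U -> R).
Hypothesis f_scalar : scalar f.
Let F : {scalar U} := HB.pack f (GRing.isLinear.Build R U R *%R f f_scalar).

Lemma scal0 : f 0 = 0. Proof. exact: (linear0 F). Qed.
Lemma scalD x y : f (x + y) = f x + f y. Proof. exact: (linearD F). Qed.
Lemma scalN x : f (- x) = - f x. Proof. exact: (linearN F). Qed.
Lemma scalB x y : f (x - y) = f x - f y. Proof. exact: (linearB F). Qed.
Lemma scalZ a x : f (a *: x) = a * f x. Proof. exact: (scalarZ F). Qed.
Lemma scal_sum I r (P : pred I) (v : I -> U) :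
  f (\sum_(i <- r | P i) v i) = \sum_(i <- r | P i) f (v i).
Proof. exact: (linear_sum F). Qed.

End ScalarMaps.

Lemma linear_comp (R : pzRingType) (U V W : lmodType R) (f : V -> W) (g : U -> V) :
  linear f -> linear g -> linear (f \o g).
Proof. by move=> f_lin g_lin a x y /=; rewrite g_lin f_lin. Qed.

Section Trace.
Variables (F : fieldType) (n : nat).
Local Notation V := 'rV[F]_n.

Lemma mulmx_swap_factors r (C : 'M[F]_(n, r)) (Rb : 'M[F]_(r, n)) X Y :
  X *m C = 1%:M -> Rb *m Y = 1%:M ->
  Rb *m C = X *m (C *m Rb *m (C *m Rb)) *m Y.
Proof. by move=> XC RY; rewrite !mulmxA XC mul1mx -!mulmxA RY mulmx1. Qed.

Lemma mxtrace_idempotent (M : 'M[F]_n) : M *m M = M -> \tr M = (\rank M)%:R.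
Proof.
move: (\rank M) (col_base M) (row_base M) (mulmx_base M) (col_base_full M)
  (row_base_free M) => r C Rb CRb /row_fullP [X XC] /row_freeP [Y RY] MM.
have RbC : Rb *m C = 1%:M.
  by rewrite (mulmx_swap_factors XC RY) CRb MM -CRb mulmxA XC mul1mx.
by rewrite -CRb mxtrace_mulC RbC mxtrace1.
Qed.

Lemma mxtrace_sqr0 (M : 'M[F]_n) : M *m M = 0 -> \tr M = 0.
Proof.
move: (\rank M) (col_base M) (row_base M) (mulmx_base M) (col_base_full M)
  (row_base_free M) => r C Rb CRb /row_fullP [X XC] /row_freeP [Y RY] MM.
rewrite -CRb mxtrace_mulC (mulmx_swap_factors XC RY) CRb MM.
by rewrite mulmx0 mul0mx mxtrace0.
Qed.

Definition trace (f : V -> V) := \tr (lin1_mx f).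

Lemma traceE (f : V -> V) : trace f = \sum_k f 'e_k 0 k.
Proof. by apply: eq_bigr => k _; rewrite mxE. Qed.

Lemma eq_trace (f g : V -> V) : f =1 g -> trace f = trace g.
Proof. by move=> fg; rewrite !traceE; apply: eq_bigr => k _; rewrite fg. Qed.

Lemma trace0 (f : V -> V) : f =1 (fun=> 0) -> trace f = 0.
Proof. by move=> f0; rewrite traceE big1 // => k _; rewrite f0 mxE. Qed.

Lemma traceD (f g : V -> V) : trace (fun x => f x + g x) = trace f + trace g.
Proof. by rewrite !traceE -big_split; apply: eq_bigr => k _; rewrite mxE. Qed.

Lemma traceN (f : V -> V) : trace (fun x => - f x) = - trace f.
Proof. by rewrite !traceE -sumrN; apply: eq_bigr => k _; rewrite mxE. Qed.

Lemma traceZ a (f : V -> V) : trace (fun x => a *: f x) = a * trace f.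
Proof. by rewrite !traceE mulr_sumr; apply: eq_bigr => k _; rewrite mxE. Qed.

Lemma row_lin1 (f : V -> V) i : row i (lin1_mx f) = f 'e_i.
Proof. by apply/rowP => j; rewrite !mxE. Qed.

Lemma lin1_mx_comp (f g : V -> V) : linear f ->
  lin1_mx (f \o g) = lin1_mx g *m lin1_mx f.
Proof.
move=> f_lin; apply/row_matrixP => i.
pose Fl : {linear V -> V} := HB.pack f (GRing.isLinear.Build F V V *:%R f f_lin).
by rewrite row_mul !row_lin1 (mul_rV_lin1 Fl).
Qed.

Lemma traceC (f g : V -> V) : linear f -> linear g ->
  trace (f \o g) = trace (g \o f).
Proof.
move=> f_lin g_lin.
by rewrite /trace (lin1_mx_comp g f_lin) (lin1_mx_comp f g_lin) mxtrace_mulC.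
Qed.

Lemma trace_idempotent (f : V -> V) : linear f -> f \o f =1 f ->
  trace f = (\rank (lin1_mx f))%:R.
Proof.
move=> f_lin ff; apply: mxtrace_idempotent.
by rewrite -(lin1_mx_comp f f_lin); apply/matrixP => i j; rewrite !mxE ff.
Qed.

Lemma trace_sqr0 (f : V -> V) : linear f -> f \o f =1 (fun=> 0) -> trace f = 0.
Proof.
move=> f_lin ff; apply: mxtrace_sqr0.
by rewrite -(lin1_mx_comp f f_lin); apply/matrixP => i j; rewrite !mxE ff mxE.
Qed.

End Trace.

Section NondegenerateForm.
Variables (R : realType) (n : nat) (B : 'rV[R]_n -> 'rV[R]_n -> R).
Hypothesis B_form : is_nondeg_sym_form B.
Local Notation V := 'rV[R]_n.

Lemma formC x y : B x y = B y x.
Proof. by case: B_form. Qed.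

Lemma form_scalarl z : scalar (B^~ z).
Proof. by case: B_form => B_lin _ _ a x y; rewrite B_lin. Qed.

Lemma form_scalarr x : scalar (B x).
Proof. by move=> a y z; rewrite !(formC x) form_scalarl. Qed.

Lemma form_inj x y : (forall w, B x w = B y w) -> x = y.
Proof.
case: B_form => _ _ B_nondeg xy; apply/eqP; rewrite -subr_eq0; apply/eqP.
by apply: B_nondeg => w; rewrite (scalB (form_scalarl w)) xy subrr.
Qed.

Lemma form_expandr x w : B x w = \sum_k w 0 k * B x 'e_k.
Proof.
rewrite {1}(row_sum_delta w) (scal_sum (form_scalarr x)).
by apply: eq_bigr => k _; rewrite (scalZ (form_scalarr x)).
Qed.

Definition gram : 'M[R]_n := \matrix_(i, j) B 'e_i 'e_j.

Lemma mul_row_gram u : u *m gram = \row_j B u 'e_j.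
Proof.
apply/rowP => j; rewrite !mxE (formC u) form_expandr.
by apply: eq_bigr => i _; rewrite mxE formC.
Qed.

Lemma gram_unit : gram \in unitmx.
Proof.
rewrite -row_free_unit; apply: inj_row_free => u; rewrite mul_row_gram => /rowP u0.
case: B_form => _ _ B_nondeg; apply: B_nondeg => w.
rewrite form_expandr big1 // => k _.
by have := u0 k; rewrite !mxE => ->; rewrite mulr0.
Qed.

Definition dual k : V := 'e_k *m invmx gram.

Lemma form_dualr w k : B w (dual k) = w 0 k.
Proof.
have dual_e j : B (dual k) 'e_j = (j == k)%:R.
  have /rowP/(_ j) : \row_j B (dual k) 'e_j = 'e_k.
    by rewrite -mul_row_gram mulmxKV ?gram_unit.
  by rewrite !mxE eqxx => ->.
rewrite formC form_expandr (bigD1 k) //= big1 => [|j /negbTE jk].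
  by rewrite dual_e eqxx mulr1 addr0.
by rewrite dual_e jk mulr0.
Qed.

Lemma sum_dual_swap (F : V -> V -> R) :
  (forall y, scalar (F^~ y)) -> (forall x, scalar (F x)) ->
  \sum_k F 'e_k (dual k) = \sum_k F (dual k) 'e_k.
Proof.
move=> Fl Fr.
have dual_expand k : dual k = \sum_j B (dual k) (dual j) *: 'e_j.
  by rewrite {1}(row_sum_delta (dual k)); apply: eq_bigr => j _; rewrite form_dualr.
transitivity (\sum_k \sum_j B (dual k) (dual j) * F 'e_k 'e_j).
  apply: eq_bigr => k _; rewrite {1}dual_expand (scal_sum (Fr _)).
  by apply: eq_bigr => j _; rewrite (scalZ (Fr _)).
transitivity (\sum_k \sum_j B (dual k) (dual j) * F 'e_j 'e_k); last first.
  apply: eq_bigr => k _; rewrite {2}dual_expand (scal_sum (Fl _)).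
  by apply: eq_bigr => j _; rewrite (scalZ (Fl _)).
rewrite exchange_big /=; apply: eq_bigr => k _; apply: eq_bigr => j _.
by rewrite formC.
Qed.

Lemma trace_form (f : V -> V) : trace f = \sum_k B (f 'e_k) (dual k).
Proof. by rewrite traceE; apply: eq_bigr => k _; rewrite form_dualr. Qed.

Definition form_adj (f : V -> V) (a : V) : V := \sum_k B a (f 'e_k) *: dual k.

Lemma form_adjP f a b : linear f -> B (form_adj f a) b = B a (f b).
Proof.
move=> f_lin; rewrite (scal_sum (form_scalarl b)).
rewrite {2}(row_sum_delta b) (lin_sum f_lin) (scal_sum (form_scalarr a)).
apply: eq_bigr => k _.
rewrite (scalZ (form_scalarl b)) (formC (dual k)) form_dualr.
by rewrite (linZ f_lin) (scalZ (form_scalarr a)) mulrC.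
Qed.

Lemma form_adj_linear f : linear f -> linear (form_adj f).
Proof.
move=> f_lin a x y; apply: form_inj => w.
by rewrite (form_scalarl w) !form_adjP // (form_scalarl (f w)).
Qed.

Lemma form_adj_uniq f h : linear f -> (forall a b, B (h a) b = B a (f b)) ->
  form_adj f =1 h.
Proof. by move=> f_lin hP a; apply: form_inj => b; rewrite form_adjP // hP. Qed.

Lemma form_adjK f : linear f -> form_adj (form_adj f) =1 f.
Proof.
move=> f_lin; apply: form_adj_uniq; first exact: form_adj_linear.
by move=> a b; rewrite [RHS]formC form_adjP // formC.
Qed.

Lemma form_adj_comp f g : linear f -> linear g ->
  form_adj (f \o g) =1 form_adj g \o form_adj f.
Proof.
move=> f_lin g_lin; apply: form_adj_uniq; first exact: linear_comp.
by move=> a b; rewrite /= !form_adjP.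
Qed.

Lemma trace_form_adj f : linear f -> trace (form_adj f) = trace f.
Proof.
move=> f_lin; rewrite !trace_form.
under eq_bigr => k _ do rewrite form_adjP //.
rewrite (sum_dual_swap (F := fun x y => B x (f y))).
- by apply: eq_bigr => k _; rewrite formC.
- by move=> y a x z; rewrite form_scalarl.
- by move=> x a y z; rewrite f_lin form_scalarr.
Qed.

End NondegenerateForm.

Section TwoStepNilpotent.
Variables (R : realType) (n : nat).
Local Notation V := 'rV[R]_n.
Variables (br : V -> V -> V) (B : V -> V -> R).
Hypothesis br_lie : is_lie_bracket br.
Hypothesis B_form : is_nondeg_sym_form B.
Hypothesis br_central : forall x y z, br (br x y) z = 0.

Lemma br_linearl z : linear (br^~ z).
Proof. by case: br_lie => br_lin _ _ a x y; rewrite br_lin. Qed.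

Lemma brC x y : br x y = - br y x.
Proof. by case: br_lie. Qed.

Lemma br_linearr x : linear (br x).
Proof. by move=> a y z; rewrite !(brC x) br_linearl opprD scalerN. Qed.

Lemma br_centralr x y z : br z (br x y) = 0.
Proof. by rewrite brC br_central oppr0. Qed.

(* adT u is the adjoint ad_u^* of ad_u = [u, .], and jmap u is the map
   usually written j(u). *)
Definition adT u := form_adj B (br u).
Definition jmap u := adT^~ u.

Lemma adTP u a b : B (adT u a) b = B a (br u b).
Proof. exact: form_adjP B_form _ _ _ (br_linearr u). Qed.

Lemma jmapP u a b : B (jmap u a) b = B u (br a b).
Proof. exact: adTP. Qed.

Lemma adT_linear u : linear (adT u).
Proof. by apply: form_adj_linear; last exact: br_linearr. Qed.

Lemma jmap_linear u : linear (jmap u).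
Proof.
move=> a x y; apply: (form_inj B_form) => w.
by rewrite (form_scalarl B_form) !jmapP br_linearl (form_scalarr B_form).
Qed.

Lemma adT_br u v x : adT (br u v) x = 0.
Proof.
apply: (form_inj B_form) => w.
rewrite adTP br_central (scal0 (form_scalarr B_form x)).
by rewrite (scal0 (form_scalarl B_form w)).
Qed.

Lemma jmap_br u v x : jmap u (br v x) = 0.
Proof. exact: adT_br. Qed.

Lemma adT_adT u v x : adT u (adT v x) = 0.
Proof.
apply: (form_inj B_form) => w.
rewrite !adTP br_centralr (scal0 (form_scalarr B_form x)).
by rewrite (scal0 (form_scalarl B_form w)).
Qed.

Lemma adT_jmap u v x : adT u (jmap v x) = 0.
Proof. exact: adT_adT. Qed.

Lemma form_adj_adT u : form_adj B (adT u) =1 br u.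
Proof. by apply: form_adjK; last exact: br_linearr. Qed.

Lemma form_adj_jmap u : form_adj B (jmap u) =1 (fun x => - jmap u x).
Proof.
apply: (form_adj_uniq B_form); first exact: jmap_linear.
move=> a b; rewrite (scalN (form_scalarl B_form b)) jmapP brC.
by rewrite (scalN (form_scalarr B_form u)) opprK [RHS]formC // jmapP.
Qed.

Lemma trace_br x : trace (br x) = 0.
Proof. by apply: trace_sqr0 => [|y /=]; [exact: br_linearr | exact: br_centralr]. Qed.

Lemma trace_adT x : trace (adT x) = 0.
Proof. by rewrite (trace_form_adj B_form (br_linearr x)) trace_br. Qed.

Lemma trace_jmap x : trace (jmap x) = 0.
Proof.
have : trace (jmap x) = - trace (jmap x).
  rewrite -traceN -(trace_form_adj B_form (jmap_linear x)).
  by apply: eq_trace => y; rewrite form_adj_jmap.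
by move/eqP; rewrite -subr_eq0 opprK -mulr2n mulrn_eq0 orFb => /eqP.
Qed.

Lemma trace_br_jmap u v : trace (br u \o jmap v) = 0.
Proof.
rewrite (traceC (br_linearr u) (jmap_linear v)).
by apply: trace0 => x /=; rewrite /jmap adT_br.
Qed.

Lemma trace_jmap_adT u v : trace (jmap u \o adT v) = 0.
Proof.
rewrite -(trace_form_adj B_form (linear_comp (jmap_linear u) (adT_linear v))).
rewrite (eq_trace (form_adj_comp B_form (jmap_linear u) (adT_linear v))).
rewrite (eq_trace (g := fun x => - br v (jmap u x))) ?traceN.
  by rewrite -oppr0 -(trace_br_jmap v u).
by move=> x /=; rewrite form_adj_jmap form_adj_adT (linN (br_linearr v)).
Qed.

Lemma trace_adT_br u v : trace (adT u \o br v) = trace (br u \o adT v).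
Proof.
rewrite -(trace_form_adj B_form (linear_comp (adT_linear u) (br_linearr v))).
rewrite (eq_trace (form_adj_comp B_form (adT_linear u) (br_linearr v))).
rewrite (eq_trace (g := adT v \o br u)) ?(traceC (adT_linear v) (br_linearr u)) //.
by move=> x /=; rewrite form_adj_adT.
Qed.

Variable D : V -> V -> V.
Hypothesis D_lc : is_levi_civita br B D.

Lemma levi_civitaE u v : D u v = 2^-1 *: (br u v - adT u v - jmap u v).
Proof.
apply: (form_inj B_form) => w; have := D_lc u v w.
rewrite (scalZ (form_scalarl B_form w)) !(scalB (form_scalarl B_form w)) adTP jmapP.
rewrite (formC B_form (br w u)) (formC B_form (br w v)) (brC w u) (brC w v).
by rewrite !(scalN (form_scalarr B_form _)) => <-; field.
Qed.

Lemma levi_civita_br u w v : D (br u w) v = - 2^-1 *: adT v (br u w).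
Proof. by rewrite levi_civitaE br_central adT_br subrr sub0r scalerN -scaleNr. Qed.

Lemma levi_civita_swap w v : D w v = - 2^-1 *: (br v w + jmap v w + adT v w).
Proof. by rewrite levi_civitaE (brC w v) scaleNr -scalerN !opprD. Qed.

Lemma levi_civita_comp u v w : D u (D w v) = 4^-1 *: (adT u (br v w)
  - br u (adT v w) + jmap u (jmap v w) + jmap u (adT v w) - br u (jmap v w)).
Proof.
apply: (form_inj B_form) => x; rewrite levi_civitaE levi_civita_swap.
rewrite (linZ (br_linearr u)) (linZ (adT_linear u)) (linZ (jmap_linear u)).
rewrite !(linD (br_linearr u)) !(linD (adT_linear u)) !(linD (jmap_linear u)).
rewrite br_centralr adT_jmap adT_adT jmap_br.
have Bx := form_scalarl B_form x.
by rewrite !(scalZ Bx, scalB Bx, scalD Bx, scal0 Bx); field.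
Qed.

Lemma trace_levi_civita_br u v :
  trace (fun w => D (br u w) v) = - 2^-1 * trace (adT v \o br u).
Proof.
rewrite (eq_trace (g := fun w => - 2^-1 *: adT v (br u w))) ?traceZ // => w.
by rewrite levi_civita_br.
Qed.

Lemma trace_levi_civita_comp u v :
  trace (fun w => D u (D w v)) = 4^-1 * trace (jmap u \o jmap v).
Proof.
rewrite (eq_trace (levi_civita_comp u v)) traceZ !traceD !traceN.
by rewrite trace_adT_br subrr add0r trace_jmap_adT trace_br_jmap subr0 addr0.
Qed.

Lemma trace_levi_civita_right x : trace (fun w => D w x) = 0.
Proof.
rewrite (eq_trace (fun w => levi_civita_swap w x)) traceZ !traceD.
by rewrite trace_br trace_jmap trace_adT !addr0 mulr0.
Qed.

Lemma ricciE u v : ricci br D u v =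
  - 2^-1 * trace (adT v \o br u) - 4^-1 * trace (jmap u \o jmap v).
Proof.
rewrite /ricci /curvature -/(trace _) !traceD traceN.
by rewrite trace_levi_civita_br trace_levi_civita_comp trace_levi_civita_right addr0.
Qed.

Lemma trace_adT_brE u v :
  trace (adT v \o br u) = \sum_k B (br u 'e_k) (br v (dual B k)).
Proof. by rewrite (trace_form B_form); apply: eq_bigr => k _; rewrite adTP. Qed.

Lemma trace_adT_br_scalarl v : scalar (fun u => trace (adT v \o br u)).
Proof.
move=> a x y; rewrite !trace_adT_brE mulr_sumr -big_split.
by apply: eq_bigr => k _; rewrite br_linearl (form_scalarl B_form).
Qed.

Lemma trace_adT_br_scalarr u : scalar (fun v => trace (adT v \o br u)).
Proof.
move=> a x y; rewrite !trace_adT_brE mulr_sumr -big_split.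
by apply: eq_bigr => k _; rewrite br_linearl (form_scalarr B_form).
Qed.

Definition psi c := \sum_k br (jmap c 'e_k) (dual B k).

Lemma trace_jmap_comp u c : trace (jmap u \o jmap c) = B u (psi c).
Proof.
rewrite (trace_form B_form) (scal_sum (form_scalarr B_form u)).
by apply: eq_bigr => k _; rewrite jmapP.
Qed.

Lemma psi_central c w : br (psi c) w = 0.
Proof. by rewrite (lin_sum (br_linearl w)) big1 // => k _; rewrite br_central. Qed.

Lemma psi_linear : linear psi.
Proof.
move=> a x y; rewrite /psi scaler_sumr -big_split /=; apply: eq_bigr => k _.
by rewrite /jmap /= adT_linear br_linearl.
Qed.

Lemma sum_trace_jmap_comp : \sum_k trace (jmap 'e_k \o jmap (dual B k)) =
  - \sum_k trace (adT (dual B k) \o br 'e_k).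
Proof.
transitivity (\sum_k \sum_i B 'e_k (br (adT 'e_i (dual B k)) (dual B i))).
  apply: eq_bigr => k _; rewrite (trace_form B_form).
  by apply: eq_bigr => i _; rewrite /= jmapP.
rewrite exchange_big /=.
transitivity (- \sum_i trace (adT 'e_i \o br (dual B i))); last first.
  congr (- _); apply/esym.
  apply: (sum_dual_swap B_form (F := fun u v => trace (adT v \o br u))).
  - exact: trace_adT_br_scalarl.
  - exact: trace_adT_br_scalarr.
rewrite -sumrN; apply: eq_bigr => i _.
rewrite (sum_dual_swap B_form (F := fun x y => B x (br (adT 'e_i y) (dual B i)))).
- rewrite -(traceC (br_linearr _) (adT_linear _)) (trace_form B_form) -sumrN.
  apply: eq_bigr => k _ /=.
  by rewrite (formC B_form) brC (scalN (form_scalarl B_form _)).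
- by move=> y a x z; rewrite (form_scalarl B_form).
- by move=> x a y z; rewrite adT_linear br_linearl (form_scalarr B_form).
Qed.

Variable lambda : R.
Hypothesis ricci_einstein : forall u v, ricci br D u v = lambda * B u v.

Lemma psi_sqr u : psi (psi u) = (- 4 * lambda) *: psi u.
Proof.
apply: (form_inj B_form) => w; have := ricci_einstein (psi u) w.
rewrite ricciE (trace0 (f := adT w \o br (psi u))) => [|x /=]; last first.
  by rewrite psi_central (lin0 (adT_linear w)).
rewrite (traceC (jmap_linear _) (jmap_linear _)) trace_jmap_comp => einstein.
rewrite (scalZ (form_scalarl B_form w)) -mulrA -einstein (formC B_form w).
by field.
Qed.

Lemma trace_psi : trace psi = 4 * lambda * n%:R.
Proof.
set F := \sum_k trace (adT (dual B k) \o br 'e_k).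
have trace_psiE : trace psi = - F.
  rewrite -sum_trace_jmap_comp (trace_form B_form); apply: eq_bigr => k _.
  by rewrite (formC B_form) -trace_jmap_comp (traceC (jmap_linear _) (jmap_linear _)).
have : \sum_k ricci br D 'e_k (dual B k) = lambda * n%:R.
  under eq_bigr => k _ do rewrite ricci_einstein (form_dualr B_form) !mxE !eqxx mulr1.
  by rewrite sumr_const card_ord mulr_natr.
under eq_bigr => k _ do rewrite ricciE.
rewrite big_split /= sumrN -!mulr_sumr sum_trace_jmap_comp -/F => einstein.
rewrite trace_psiE; have -> : - F = 4 * (- 2^-1 * F - 4^-1 * - F) by field.
by rewrite einstein mulrA.
Qed.

Lemma einstein_const_mul_dim : lambda * n%:R = 0.
Proof.
have [->|lambda_neq0] := eqVneq lambda 0; first by rewrite mul0r.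
have c_neq0 : - 4 * lambda != 0 by rewrite mulf_eq0 negb_or oppr_eq0 pnatr_eq0.
pose P x := (- 4 * lambda)^-1 *: psi x.
have P_linear : linear P.
  by move=> a x y; rewrite /P psi_linear scalerDr !scalerA mulrC.
have P_idem : P \o P =1 P.
  by move=> x; rewrite /P /= (linZ psi_linear) psi_sqr !scalerA divfK.
have := trace_idempotent P_linear P_idem.
rewrite /P traceZ trace_psi.
have -> : (- 4 * lambda)^-1 * (4 * lambda * n%:R) = - n%:R by field.
move=> n_rank; have n0 : (n%:R : R) = 0.
  by apply/eqP; rewrite eq_le ler0n andbT -oppr_ge0 n_rank ler0n.
by rewrite n0 mulr0.
Qed.

End TwoStepNilpotent.

Theorem mainTheorem6 (R : realType) (n : nat)
  (br : 'rV[R]_n -> 'rV[R]_n -> 'rV[R]_n) (B : 'rV[R]_n -> 'rV[R]_n -> R)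
  (D : 'rV[R]_n -> 'rV[R]_n -> 'rV[R]_n) (lambda : R) :
  is_lie_bracket br ->
  is_nondeg_sym_form B ->
  two_step_nilpotent br ->
  is_levi_civita br B D ->
  (forall u v : 'rV[R]_n, ricci br D u v = lambda * B u v) ->
  lambda = 0.
Proof.
move=> br_lie B_form [[x [y xy_neq0]] br_central] D_lc einstein.
have n_neq0 : (n%:R : R) != 0.
  rewrite pnatr_eq0; apply: contraNneq xy_neq0 => n0.
  by apply/eqP/rowP => i; have := ltn_ord i; rewrite [X in (_ < X)%N]n0.
have := einstein_const_mul_dim br_lie B_form br_central D_lc einstein.
by move/eqP; rewrite mulf_eq0 (negbTE n_neq0) orbF => /eqP.
Qed.
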